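(* There is an absolute constant $C>0$ such that for all integers $d,h\ge 1$ the following holds: the class of graphs admitting a signed tree model of width at most $d$ whose tree has depth at most $h$ admits an adjacency labeling scheme in which every $n$-vertex graph ($n\ge 2$) receives labels of at most $C\,d\,h\log n$ bits; i.e., every $n$-vertex graph with a signed tree model of width $d$ and depth $h$ admits $O(dh\log n)$-bit adjacency labels decodable by a common decoder.
   Context: Tree notation: for a rooted tree $T$, $u\prec_T u'$ means $u$ is a strict ancestor of $u'$, $u\preceq_T u'$ means $u=u'$ or $u\prec_T u'$; for unordered pairs, $uv\preceq_T u'v'$ means ($u\preceq_T u'$ and $v\preceq_T v'$) or ($v\preceq_T u'$ and $u\preceq_T v'$), and $uv\prec_T u'v'$ means $uv\preceq_T u'v'$ and $\{u,v\}\ne\{u',v'\}$. A full rooted binary tree has every non-leaf node with exactly two children; its depth is the maximum number of nodes on a root-to-leaf path. A transversal pair of $T$ is a pair of distinct nodes neither an ancestor of the other; two transversal pairs cross if their endpoints can be named $\{a,b\},\{a',b'\}$ with $a\prec_T a'$ and $b'\prec_T b$. A signed tree model is $(T,A(T),B(T))$ with $T$ a full rooted binary tree and $A(T),B(T)$ disjoint sets of transversal pairs, no two pairs of $A(T)\cup B(T)$ crossing. It defines the graph on the leaf set $L(T)$ where distinct leaves $u,v$ are adjacent iff some $u'v'\in B(T)$ has $u'v'\preceq_T uv$ and no $u''v''\in A(T)$ has $u'v'\prec_T u''v''\preceq_T uv$. Its width is the degeneracy of the graph $(V(T),A(T)\cup B(T))$. An adjacency labeling scheme with $f(n)$-bit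 labels for a class $\mathcal C$: a decoder $D$ on pairs of binary strings such that every $n$-vertex $G\in\mathcal C$ has a labeling $\ell$ of its vertices with strings of length $\le f(n)$ satisfying $D(\ell(u),\ell(v))=1$ iff $uv\in E(G)$ for distinct $u,v$. *)

From Stdlib Require Import Reals.
From mathcomp Require Import all_boot.

Set Implicit Arguments.
Unset Strict Implicit.
Unset Printing Implicit Defensive.

(* A node is identified by its position: the
   sequence of directions (false = left, true = right) from the root.
   The root is [::]; u is an ancestor of v iff u is a prefix of v. *)
Inductive btree : Type := BLeaf | BNode of btree & btree.

Definition node := seq bool.

Fixpoint nodes (t : btree) : seq node :=
  [::] :: match t with
          | BLeaf => [::]
          | BNode l r => map (cons false) (nodes l) ++ map (cons true) (nodes r)
          end.

Fixpoint leaves (t : btree) : seq node :=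
  match t with
  | BLeaf => [:: [::]]
  | BNode l r => map (cons false) (leaves l) ++ map (cons true) (leaves r)
  end.

Fixpoint depth (t : btree) : nat :=
  match t with
  | BLeaf => 1
  | BNode l r => (maxn (depth l) (depth r)).+1
  end.

Definition anc_le (u v : node) : bool := prefix u v.
Definition anc_lt (u v : node) : bool := prefix u v && (u != v).

(* unordered pairs are represented by ordered pairs; all notions below are
   invariant under swapping the components *)
Definition upair_eq (p q : node * node) : bool :=
  ((p.1 == q.1) && (p.2 == q.2)) || ((p.1 == q.2) && (p.2 == q.1)).

Definition pair_le (p q : node * node) : bool :=
  (anc_le p.1 q.1 && anc_le p.2 q.2) || (anc_le p.2 q.1 && anc_le p.1 q.2).

Definition pair_lt (p q : node * node) : bool :=
  pair_le p q && ~~ upair_eq p q.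

Definition transversal (t : btree) (p : node * node) : bool :=
  [&& p.1 \in nodes t, p.2 \in nodes t, p.1 != p.2,
      ~~ anc_le p.1 p.2 & ~~ anc_le p.2 p.1].

Definition cross (p q : node * node) : bool :=
  has (fun ab : node * node =>
         has (fun ab' : node * node => anc_lt ab.1 ab'.1 && anc_lt ab'.2 ab.2)
             [:: q; (q.2, q.1)])
      [:: p; (p.2, p.1)].

Definition signed_tree_model (t : btree) (A B : seq (node * node)) : Prop :=
  [/\ all (transversal t) A, all (transversal t) B,
      (forall p q, p \in A -> q \in B -> ~~ upair_eq p q) &
      (forall p q, p \in A ++ B -> q \in A ++ B -> ~~ cross p q)].

Definition model_adj (A B : seq (node * node)) (u v : node) : bool :=
  has (fun p' => pair_le p' (u, v) &&
         ~~ has (fun p'' => pair_lt p' p'' && pair_le p'' (u, v)) A) B.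

Definition ab_edge (A B : seq (node * node)) (u v : node) : bool :=
  (u != v) && has (fun p => upair_eq p (u, v)) (A ++ B).

(* the graph (V(T), A(T) u B(T)) is k-degenerate: every nonempty set of
   nodes contains a node with at most k neighbours in it.
   Its degeneracy (the width of the model) is at most k iff this holds. *)
Definition width_le (t : btree) (A B : seq (node * node)) (k : nat) : Prop :=
  forall S : seq node, all (fun x => x \in nodes t) S -> S != [::] ->
    exists2 v, v \in S & count (ab_edge A B v) (undup S) <= k.

Definition has_stm (V : finType) (adj : rel V) (d h : nat) : Prop :=
  exists (t : btree) (A B : seq (node * node)) (f : V -> node),
    [/\ signed_tree_model t A B /\ width_le t A B d, depth t <= h,
        injective f /\ (forall x, f x \in leaves t),
        (forall u, u \in leaves t -> exists x, f x = u) &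
        (forall x y, x != y -> adj x y = model_adj A B (f x) (f y))].

From Pilot Require Import Defs.
From Stdlib Require Import Reals Lra.
From mathcomp Require Import all_boot zify.

Set Implicit Arguments.
Unset Strict Implicit.

(* The graph (V(T), A(T) u B(T)) is d-degenerate, so its edges can be oriented
   with out-degree at most d.  The label of a leaf u lists u itself, an
   O(log n)-bit identifier of each of its at most h ancestors, and, for each
   ancestor a, the identifiers of the out-neighbours of a with two bits telling
   whether the edge lies in A(T) or B(T): O(d h log n) bits.  Whether leaves u
   and v are adjacent depends only on the pairs of A(T) u B(T) below uv, i.e.
   the edges between an ancestor of u and an ancestor of v; each such edge is
   recorded at its tail, and its head is recognised among the ancestors of the
   other leaf by its identifier. *)

Lemma upair_refl p : upair_eq p p.
Proof. by rewrite /upair_eq !eqxx. Qed.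

Lemma upair_eq_cases p q : upair_eq p q -> q = p \/ q = (p.2, p.1).
Proof.
case: p q => [a b] [c d]; rewrite /upair_eq /=.
by case/orP=> /andP[/eqP-> /eqP->]; [left|right].
Qed.

Lemma upair_sym p q : upair_eq p q = upair_eq q p.
Proof.
case: p q => [a b] [c d]; rewrite /upair_eq /=.
by rewrite (eq_sym a) (eq_sym b) (eq_sym a d) (eq_sym b c) (andbC (d == a)).
Qed.

Lemma upair_swapr p a b : upair_eq p (b, a) = upair_eq p (a, b).
Proof. by case: p => c d; rewrite /upair_eq /= orbC. Qed.

Lemma upair_swapl p a b : upair_eq (b, a) p = upair_eq (a, b) p.
Proof. by rewrite upair_sym upair_swapr upair_sym. Qed.

Lemma upair_trans p q r : upair_eq p q -> upair_eq q r -> upair_eq p r.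
Proof. by move/upair_eq_cases=> [->|->] //; case: p => a b /=; rewrite upair_swapl. Qed.

Lemma pair_le_swapl a b r : pair_le (b, a) r = pair_le (a, b) r.
Proof. by rewrite /pair_le /= orbC. Qed.

Lemma pair_le_swapr a b r : pair_le r (b, a) = pair_le r (a, b).
Proof. by rewrite /pair_le /= orbC andbC (andbC (anc_le r.1 b)). Qed.

Lemma pair_le_upair p q r :
  upair_eq p q -> pair_le p r = pair_le q r /\ pair_le r p = pair_le r q.
Proof.
move/upair_eq_cases=> [->|->]; first by split.
by case: p => a b /=; rewrite pair_le_swapl pair_le_swapr.
Qed.

Lemma pair_lt_upair p q r :
  upair_eq p q -> pair_lt p r = pair_lt q r /\ pair_lt r p = pair_lt r q.
Proof.
move/upair_eq_cases=> [->|->]; first by split.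
case: p => a b /=; rewrite /pair_lt pair_le_swapl pair_le_swapr.
by rewrite upair_swapl upair_swapr.
Qed.

Lemma eq_has_upair (P : pred (node * node)) X Y :
  (forall p q, upair_eq p q -> P p = P q) ->
  (forall p, P p -> has (upair_eq p) X = has (upair_eq p) Y) ->
  has P X = has P Y.
Proof.
move=> Pinv XY.
suff sub X' Y' : (forall p, P p -> has (upair_eq p) X' -> has (upair_eq p) Y') ->
    has P X' -> has P Y'.
  by apply/idP/idP; apply: sub => p Pp; rewrite XY.
move=> XY' /hasP[x xX Px].
have /(XY' x Px)/hasP[y yY exy] : has (upair_eq x) X'.
  by apply/hasP; exists x => //; apply: upair_refl.
by apply/hasP; exists y; rewrite // -(Pinv _ _ exy).
Qed.

Lemma eq_model_adj A B A' B' u v :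
  (forall p, pair_le p (u, v) -> has (upair_eq p) A = has (upair_eq p) A') ->
  (forall p, pair_le p (u, v) -> has (upair_eq p) B = has (upair_eq p) B') ->
  model_adj A B u v = model_adj A' B' u v.
Proof.
move=> AA' BB'; rewrite /model_adj.
set live := fun X p' => pair_le p' (u, v) &&
  ~~ has (fun p'' => pair_lt p' p'' && pair_le p'' (u, v)) X.
change (has (live A) B = has (live A') B').
have -> : has (live A) B = has (live A') B.
  apply: eq_has => p'; rewrite /live; case le_p'uv: (pair_le p' (u, v)) => //=.
  congr negb; apply: eq_has_upair; last by move=> p /andP[_]; apply: AA'.
  move=> p q e; case: (pair_lt_upair p' e) => _ ->.
  by case: (pair_le_upair (u, v) e) => ->.
apply: eq_has_upair; last by move=> p /andP[le _]; apply: BB'.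
move=> p q e; rewrite /live; case: (pair_le_upair (u, v) e) => -> _.
by congr (_ && ~~ _); apply: eq_has => r; case: (pair_lt_upair r e) => ->.
Qed.

Lemma uniq_leaves t : uniq (leaves t).
Proof.
elim: t => [|l IHl r IHr] //=.
rewrite cat_uniq !map_inj_uniq // ?IHl ?IHr ?andbT /=; try by move=> x y [].
by apply/hasP => -[x /mapP[y _ ->] /mapP[z _]].
Qed.

Lemma size_nodes_lt_double_leaves t : size (nodes t) < (size (leaves t)).*2.
Proof.
elim: t => [|l IHl r IHr] //=.
by rewrite !size_cat !size_map; move: IHl IHr; rewrite -!mul2n; unfold node in *; lia.
Qed.

Lemma size_leaf_lt_depth t u : u \in leaves t -> size u < depth t.
Proof.
elim: t u => [|l IHl r IHr] u /=; first by rewrite inE => /eqP->.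
rewrite mem_cat ltnS => /orP[] /mapP[w wl ->] /=.
  exact: leq_trans (IHl w wl) (leq_maxl _ _).
exact: leq_trans (IHr w wl) (leq_maxr _ _).
Qed.

Lemma ab_edge_sym A B a b : ab_edge A B a b = ab_edge A B b a.
Proof.
rewrite /ab_edge eq_sym; congr (_ && _).
by apply: eq_has => p; rewrite upair_swapr.
Qed.

Definition orients (A B : seq (node * node)) (S : seq node)
    (out : node -> seq node) : Prop :=
  forall a b, a \in S -> b \in S -> ab_edge A B a b -> b \in out a \/ a \in out b.

(* Peel off a vertex of degree at most d, orient its edges outwards, recurse. *)
Lemma degenerate_orientation t A B d S : width_le t A B d ->
  uniq S -> all (fun x => x \in nodes t) S ->
  exists out : node -> seq node,
    [/\ forall a, size (out a) <= d, forall a, {subset out a <= S} & orients A B S out].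
Proof.
move=> Wd; have [n] := ubnP (size S); elim: n S => // n IH S /ltnSE sizeS uS St.
have [->|S0] := altP (S =P [::]); first by exists (fun _ => [::]).
have [v vS deg_v] := Wd S St S0; rewrite undup_id // in deg_v.
have [|||out' [out'_d out'_S out'_or]] := IH (rem v S).
- by rewrite size_rem //; move: S0 sizeS; rewrite -size_eq0; case: (size S).
- exact: rem_uniq.
- by apply/allP => x /mem_rem; apply: (allP St).
exists (fun a => if a == v then filter (ab_edge A B v) S else out' a); split.
- by move=> a; case: eqP => _; rewrite ?size_filter.
- move=> a x; case: eqP => _; first by rewrite mem_filter => /andP[].
  by move/out'_S/mem_rem.
move=> a b aS bS e.
have [av|anv] := altP (a =P v); first by left; rewrite mem_filter -av e.
have [bv|bnv] := altP (b =P v).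
  by right; rewrite mem_filter -bv ab_edge_sym e aS.
by apply: out'_or => //; rewrite (mem_rem_uniq _ uS) inE ?anv ?bnv.
Qed.

Lemma width_orientation t A B d : width_le t A B d ->
  exists out : node -> seq node,
    [/\ forall a, size (out a) <= d, forall a, {subset out a <= nodes t}
      & orients A B (nodes t) out].
Proof.
move=> Wd; have St : all (fun x => x \in nodes t) (undup (nodes t)).
  by apply/allP => x; rewrite mem_undup.
have [out [out_d out_S out_or]] := degenerate_orientation Wd (undup_uniq _) St.
exists out; split=> // [a x /out_S|a b an bn]; rewrite ?mem_undup //.
by apply: out_or; rewrite mem_undup.
Qed.

(* Self-delimiting code: each bit b is written as [true; b], and the end of a
   word is marked by [false; false]. *)
Fixpoint code_word (w : seq bool) : seq bool :=
  if w is b :: w' then true :: b :: code_word w' else [:: false; false].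

Definition code_words (ws : seq (seq bool)) : seq bool := flatten (map code_word ws).

Fixpoint decode_from (s cur : seq bool) : seq (seq bool) :=
  match s with
  | true :: b :: s' => decode_from s' (rcons cur b)
  | false :: false :: s' => cur :: decode_from s' [::]
  | _ => [::]
  end.

Definition decode_words (s : seq bool) : seq (seq bool) := decode_from s [::].

Lemma decode_from_code_word w s cur :
  decode_from (code_word w ++ s) cur = (cur ++ w) :: decode_from s [::].
Proof.
elim: w cur => [|b w IH] cur /=; first by rewrite cats0.
by rewrite IH cat_rcons.
Qed.

Lemma code_wordsK : cancel code_words decode_words.
Proof.
elim=> [|w ws IH] //=.
by rewrite /decode_words /code_words /= decode_from_code_word -/(code_words ws)
  -/(decode_words (code_words ws)) IH.
Qed.

Lemma size_code_words ws :
  size (code_words ws) = (sumn (map size ws)).*2 + (size ws).*2.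
Proof.
elim: ws => [|w ws IH] //=; rewrite /code_words /= size_cat -/(code_words ws) IH.
have -> : size (code_word w) = (size w).*2.+2 by elim: w => //= b w ->; rewrite doubleS.
by rewrite doubleD doubleS; lia.
Qed.

Lemma sumn_map_le (T : eqType) (f : T -> nat) (s : seq T) k :
  (forall x, x \in s -> f x <= k) -> sumn (map f s) <= size s * k.
Proof.
elim: s => [|x s IH] //= fk; rewrite mulSn leq_add ?fk ?mem_head //.
by apply: IH => y ys; rewrite fk // inE ys orbT.
Qed.

Definition bits (W m : nat) : seq bool := mkseq (fun i => odd (m %/ 2 ^ i)) W.

Lemma size_bits W m : size (bits W m) = W.
Proof. exact: size_mkseq. Qed.

Lemma bitsS W m : bits W.+1 m = odd m :: bits W m./2.
Proof.
rewrite /bits /mkseq /= expn0 divn1; congr (_ :: _).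
rewrite -(addn0 1) iotaDl -map_comp; apply: eq_map => i /=.
by rewrite add1n expnS divnMA divn2.
Qed.

Lemma bits_inj W m m' : m < 2 ^ W -> m' < 2 ^ W -> bits W m = bits W m' -> m = m'.
Proof.
elim: W m m' => [|W IH] m m'; first by rewrite expn0; lia.
rewrite !bitsS expnS mul2n => ltm ltm' [odd_eq half_eq].
have := IH m./2 m'./2; rewrite !ltn_half_double => /(_ ltm ltm' half_eq) eq_half.
by rewrite -(odd_double_half m) -(odd_double_half m') odd_eq eq_half.
Qed.

Definition mem_upair (X : seq (node * node)) (q : node * node) : bool :=
  has (fun p => upair_eq p q) X.

(* [outs] lists, for each ancestor [take i u] of [u], the entries
   [inA :: inB :: id] of its out-neighbours; [ids] lists the identifiers of the
   ancestors of [v], so the position of [id] in [ids] is the depth of the head. *)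
Definition candidates (u : node) (outs : seq (seq (seq bool))) (v : node)
    (ids : seq (seq bool)) : seq ((node * node) * (bool * bool)) :=
  flatten [seq [seq ((take i u, take (index (drop 2 e) ids) v),
                     (nth false e 0, nth false e 1))
               | e <- nth [::] outs i & index (drop 2 e) ids < size ids]
          | i <- iota 0 (size outs)].

Definition parse_label (l : seq bool) :=
  let ws := decode_words l in
  (head [::] ws, decode_words (nth [::] ws 1), map decode_words (drop 2 ws)).

Definition decode_adj (l1 l2 : seq bool) : bool :=
  let: (u, ids1, outs1) := parse_label l1 in
  let: (v, ids2, outs2) := parse_label l2 in
  let C := candidates u outs1 v ids2 ++ candidates v outs2 u ids1 in
  model_adj [seq c.1 | c <- C & c.2.1] [seq c.1 | c <- C & c.2.2] u v.

Section Labels.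
Variables (t : btree) (A B : seq (node * node)) (out : node -> seq node) (W : nat).

Definition node_id (a : node) : seq bool := bits W (index a (nodes t)).

Definition out_entry (a b : node) : seq bool :=
  mem_upair A (a, b) :: mem_upair B (a, b) :: node_id b.

Lemma drop_out_entry a b : drop 2 (out_entry a b) = node_id b.
Proof. by rewrite /= drop0. Qed.

Definition ancestor_ids (u : node) : seq (seq bool) :=
  [seq node_id (take i u) | i <- iota 0 (size u).+1].

Definition ancestor_outs (u : node) : seq (seq (seq bool)) :=
  [seq [seq out_entry (take i u) b | b <- out (take i u)] | i <- iota 0 (size u).+1].

Definition label (u : node) : seq bool :=
  code_words (u :: code_words (ancestor_ids u) :: map code_words (ancestor_outs u)).

Lemma parse_labelK u : parse_label (label u) = (u, ancestor_ids u, ancestor_outs u).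
Proof.
have drop2 (x y : seq bool) s : drop 2 (x :: y :: s) = s by rewrite /= drop0.
rewrite /parse_label /label code_wordsK drop2 [nth _ _ 1]/= code_wordsK [head _ _]/=.
by rewrite -map_comp (eq_map code_wordsK) map_id.
Qed.

Lemma size_label d u : 0 < d -> (forall a, size (out a) <= d) ->
  size (label u) <= 8 * d * (size u).+1 * (W + 3).
Proof.
move=> d_gt0 out_d; set m := (size u).+1.
have [m_ids m_outs] : size (ancestor_ids u) = m /\ size (ancestor_outs u) = m.
  by rewrite !size_map size_iota.
have size_ids : sumn (map size (ancestor_ids u)) <= m * W.
  by rewrite -m_ids; apply: sumn_map_le => _ /mapP[i _ ->]; rewrite size_bits.
have size_out_code a : size (code_words [seq out_entry a b | b <- out a])
    <= 2 * (d * (W + 2)) + 2 * d.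
  set es := [seq out_entry a b | b <- out a].
  have size_es : sumn (map size es) <= size es * (W + 2).
    by apply: sumn_map_le => _ /mapP[b _ ->]; rewrite /= size_bits addn2.
  rewrite size_code_words -!mul2n; move: size_es; rewrite size_map.
  by have := out_d a; nia.
have size_outs : sumn (map size (map code_words (ancestor_outs u))) <=
    m * (2 * (d * (W + 2)) + 2 * d).
  by rewrite -map_comp -m_outs; apply: sumn_map_le => _ /mapP[i _ ->]; apply: size_out_code.
rewrite /label; move: (ancestor_ids u) (ancestor_outs u) m_ids m_outs size_ids size_outs.
move=> ids outs m_ids m_outs; rewrite size_code_words /= size_code_words size_map.
by rewrite m_ids m_outs -!mul2n /node; nia.
Qed.

Hypothesis nodes_lt : size (nodes t) < 2 ^ W.
Hypothesis out_nodes : forall a, {subset out a <= nodes t}.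

Lemma node_id_inj b c : b \in nodes t -> node_id c = node_id b -> c = b.
Proof.
move=> bt /bits_inj.
have idx_lt x : index x (nodes t) < 2 ^ W by rewrite (leq_trans _ nodes_lt) // ltnS index_size.
move=> /(_ (idx_lt c) (idx_lt b)) eq_idx.
have ct : c \in nodes t by rewrite -index_mem eq_idx index_mem.
by rewrite -(nth_index [::] ct) eq_idx nth_index.
Qed.

Lemma take_index_ancestor_ids v b : b \in nodes t ->
  index (node_id b) (ancestor_ids v) < size (ancestor_ids v) ->
  take (index (node_id b) (ancestor_ids v)) v = b.
Proof.
move=> bt lt_idx; apply: node_id_inj => //.
have lt_v : index (node_id b) (ancestor_ids v) < (size v).+1.
  by move: lt_idx; rewrite size_map size_iota.
have := nth_index [::] (etrans (esym (index_mem _ _)) lt_idx).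
by rewrite (nth_map 0) ?size_iota // nth_iota // add0n.
Qed.

Lemma nth_ancestor_outs u i : i <= size u ->
  nth [::] (ancestor_outs u) i = [seq out_entry (take i u) b | b <- out (take i u)].
Proof. by move=> le_iu; rewrite (nth_map 0) ?size_iota // nth_iota. Qed.

Lemma mem_candidates u v a b : prefix a u -> prefix b v -> b \in out a ->
  ((a, b), (mem_upair A (a, b), mem_upair B (a, b)))
    \in candidates u (ancestor_outs u) v (ancestor_ids v).
Proof.
move=> au bv ba.
have take_a : take (size a) u = a by apply/eqP; rewrite -prefixE.
have take_b : take (size b) v = b by apply/eqP; rewrite -prefixE.
have lt_idx : index (node_id b) (ancestor_ids v) < size (ancestor_ids v).
  rewrite index_mem; apply/mapP; exists (size b); rewrite ?take_b //.
  by rewrite mem_iota ltnS size_prefix.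
apply/flattenP; eexists.
  by apply/mapP; exists (size a); rewrite // mem_iota size_map size_iota ltnS size_prefix.
apply/mapP; exists (out_entry a b).
  rewrite mem_filter drop_out_entry lt_idx nth_ancestor_outs ?size_prefix //.
  by rewrite take_a map_f.
by rewrite drop_out_entry take_index_ancestor_ids ?take_a ?(out_nodes ba).
Qed.

Lemma candidate_flags u v c :
  c \in candidates u (ancestor_outs u) v (ancestor_ids v) ->
  c.2 = (mem_upair A c.1, mem_upair B c.1).
Proof.
case/flattenP=> s /mapP[i]; rewrite size_map size_iota mem_iota leq0n add0n ltnS.
move=> le_iu ->; case/mapP=> e; rewrite mem_filter nth_ancestor_outs //.
case/andP=> + /mapP[b ba e_entry] ->; rewrite e_entry drop_out_entry => lt_idx.
by rewrite take_index_ancestor_ids ?(out_nodes ba).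
Qed.



Hypothesis out_orients : orients A B (nodes t) out.

Let label_candidates u v :=
  candidates u (ancestor_outs u) v (ancestor_ids v) ++
  candidates v (ancestor_outs v) u (ancestor_ids u).

Lemma has_upair_candidates (sel : bool * bool -> bool) X u v p :
  (forall q, sel (mem_upair A q, mem_upair B q) = mem_upair X q) ->
  all (Defs.transversal t) X -> {subset X <= A ++ B} -> pair_le p (u, v) ->
  has (upair_eq p) X = has (upair_eq p) [seq c.1 | c <- label_candidates u v & sel c.2].
Proof.
move=> sel_X X_tr XAB le_puv; apply/idP/idP; last first.
  case/hasP=> q /mapP[c]; rewrite mem_filter => /andP[sel_c c_cand] -> e_pq.
  have c2 : c.2 = (mem_upair A c.1, mem_upair B c.1).
    by move: c_cand; rewrite mem_cat => /orP[] /candidate_flags.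
  move: sel_c; rewrite c2 sel_X => /hasP[p0 p0X e0]; apply/hasP; exists p0 => //.
  by rewrite upair_sym (upair_trans e0) // upair_sym.
case/hasP=> p0 p0X e0; have p0_tr := allP X_tr p0 p0X.
have [a [b [au bv e1]]] : exists a b, [/\ prefix a u, prefix b v & upair_eq p0 (a, b)].
  have := le_puv; case: (pair_le_upair (u, v) e0) => -> _.
  case: p0 {p0X e0 p0_tr} => x y; rewrite /pair_le /anc_le /= => /orP[] /andP[? ?].
    by exists x, y; rewrite upair_refl.
  by exists y, x; rewrite upair_swapr upair_refl.
have Xab : mem_upair X (a, b) by apply/hasP; exists p0.
have [at_ bt ab] : [/\ a \in nodes t, b \in nodes t & a != b].
  move: p0_tr e1; case: p0 {p0X e0 Xab} => x y.
  rewrite /Defs.transversal /upair_eq /= => /and5P[xt yt xy _ _].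
  by case/orP=> /andP[/eqP<- /eqP<-]; rewrite ?xt ?yt // eq_sym.
have e_pab : upair_eq p (a, b) := upair_trans e0 e1.
have edge : ab_edge A B a b by rewrite /ab_edge ab; apply/hasP; exists p0; rewrite ?XAB.
apply/hasP; case: (out_orients at_ bt edge) => [ba|ab_out].
  exists (a, b) => //; apply/mapP; exists ((a, b), (mem_upair A (a, b), mem_upair B (a, b))) => //.
  by rewrite mem_filter sel_X Xab mem_cat mem_candidates.
exists (b, a); last by rewrite upair_swapr.
apply/mapP; exists ((b, a), (mem_upair A (b, a), mem_upair B (b, a))) => //.
have Xba : mem_upair X (b, a) by move: Xab; rewrite /mem_upair; under eq_has do rewrite upair_swapr.
by rewrite mem_filter sel_X Xba mem_cat (mem_candidates bv au ab_out) orbT.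
Qed.

Lemma decode_adj_label u v :
  all (Defs.transversal t) A -> all (Defs.transversal t) B ->
  decode_adj (label u) (label v) = model_adj A B u v.
Proof.
move=> A_tr B_tr; rewrite /decode_adj !parse_labelK; symmetry.
apply: eq_model_adj => p le_puv.
  by apply: (has_upair_candidates (sel := fun f => f.1)) => // x xA; rewrite mem_cat xA.
by apply: (has_upair_candidates (sel := fun f => f.2)) => // x xB; rewrite mem_cat xB orbT.
Qed.

End Labels.

Lemma size_leaves_le_card (V : finType) t (f : V -> node) :
  (forall u, u \in leaves t -> exists x, f x = u) -> size (leaves t) <= #|V|.
Proof.
move=> f_onto; rewrite cardT -(size_map f); apply: uniq_leq_size; first exact: uniq_leaves.
by move=> u /f_onto[x <-]; rewrite map_f ?mem_enum.
Qed.

Lemma size_nodes_lt_exp t n :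
  size (leaves t) <= n -> size (nodes t) < 2 ^ (trunc_log 2 n).+2.
Proof.
move=> leaves_n; have := size_nodes_lt_double_leaves t.
have := trunc_log_ltn n (isT : 1 < 2); rewrite !expnS -mul2n.
by move: (2 ^ _) leaves_n => p; lia.
Qed.

Section RealBounds.
Local Open Scope R_scope.

Lemma INR_expn (m k : nat) : INR (m ^ k)%N = INR m ^ k.
Proof. by elim: k => [|k IH]; rewrite ?expn0 // expnS mult_INR IH. Qed.

Lemma INR_le_log2 (k n : nat) : (2 ^ k <= n)%N -> INR k <= ln (INR n) / ln 2.
Proof.
move=> /leP le_2k_n; have ln2_gt0 : 0 < ln 2 by rewrite -ln_1; apply: ln_increasing; lra.
apply: (Rmult_le_reg_r (ln 2)) => //.
rewrite /Rdiv Rmult_assoc Rinv_l ?Rmult_1_r; last exact: Rgt_not_eq.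
have pow_le_n : 2 ^ k <= INR n.
  by move/le_INR: le_2k_n; rewrite INR_expn.
rewrite -ln_pow; last lra.
have [lt|->] := Rle_lt_or_eq_dec _ _ pow_le_n; last exact: Rle_refl.
by apply/Rlt_le/ln_increasing => //; apply: pow_lt; lra.
Qed.

Lemma INR_le_mul_log2 (s c d h k n : nat) :
  (s <= c * d * h * k)%N -> (2 ^ k <= n)%N ->
  INR s <= INR c * INR d * INR h * (ln (INR n) / ln 2).
Proof.
move=> /leP/le_INR le_s /INR_le_log2 le_k; apply: Rle_trans le_s _.
rewrite !mult_INR; apply: Rmult_le_compat_l => //.
by apply: Rmult_le_pos; [apply: Rmult_le_pos|]; apply: pos_INR.
Qed.

End RealBounds.

Theorem proposition4p1 :
  exists C : R, Rlt 0 C /\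
  forall d h : nat, 1 <= d -> 1 <= h ->
  exists D : seq bool -> seq bool -> bool,
  forall (V : finType) (adj : rel V),
    (forall x y, adj x y = adj y x) -> (forall x, ~~ adj x x) ->
    2 <= #|V| ->
    has_stm adj d h ->
    exists l : V -> seq bool,
      (forall x, Rle (INR (size (l x)))
                     (Rmult (Rmult (Rmult C (INR d)) (INR h))
                            (Rdiv (ln (INR #|V|)) (ln 2)))) /\
      (forall x y, x != y -> D (l x) (l y) = adj x y).
Proof.
exists (INR 48); split; first by apply: lt_0_INR; apply/leP.
move=> d h d_gt0 h_gt0; exists decode_adj => V adj _ _ card_V.
case=> t [A [B [f [[[A_tr B_tr _ _] width] depth_h [_ f_leaves] f_onto adj_model]]]].
set k := trunc_log 2 #|V|.
have k_gt0 : 0 < k by rewrite trunc_log_gt0.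
have nodes_lt := size_nodes_lt_exp (size_leaves_le_card f_onto).
have [out [out_d out_nodes out_orients]] := width_orientation width.
exists (fun x => label t A B out k.+2 (f x)); split=> [x|x y xy].
  apply: (@INR_le_mul_log2 _ _ _ _ k); last by apply: trunc_logP; lia.
  apply: leq_trans (size_label t A B k.+2 (f x) d_gt0 out_d) _.
  have le_fx_h := leq_trans (size_leaf_lt_depth (f_leaves x)) depth_h.
  have le_k : k.+2 + 3 <= 6 * k by lia.
  have := leq_mul le_fx_h le_k; move: (size (f x)).+1 (k.+2 + 3) => m K; nia.
by rewrite (decode_adj_label nodes_lt out_nodes out_orients) // adj_model.
Qed.
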